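(* Let $g \colon \mathbb{R}^n \to \mathbb{R}^m$ ($m \le n$) be smooth, let $M = g^{-1}(0)$, and assume the Jacobian of $g$ has maximal rank at every point of $M$. Let $q_0, q_N \in M$. Consider the optimal control problem of extremising the cost functional \[ J(u,\lambda) = \int_0^1 \left( \tfrac{1}{2} \|u(t)\|^2 - g(q(t))^\top \lambda(t) \right) \mathrm{d} t \] over controls $(u,\lambda) \in \mathcal{C}^\infty([0,1],\mathbb{R}^n\times \mathbb{R}^m)$, where the associated state $q \in \mathcal{C}^\infty([0,1],\mathbb{R}^n)$ satisfies the state equation $\dot q = u$ with $q(0)=q_0$, $q(1)=q_N$. Then for any optimal control $(u,\lambda) \in \mathcal{C}^\infty([0,1],\mathbb{R}^n\times \mathbb{R}^m)$ with associated state trajectory $q$ there exists a costate trajectory $p\colon[0,1]\to\mathbb{R}^n$ such that \[ \dot{q}=u,\qquad \dot{p}=-g'(q)^\top \lambda, \] subject to the algebraic constraints $g(q)=0$, $p=u$, and the boundary conditions $q(0)=q_0$, $q(1)=q_N$.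
   Context: $\|\cdot\|$ is the Euclidean norm on $\mathbb{R}^n$, $g'(q)$ denotes the Jacobian matrix of $g$ at $q$ (an $m\times n$ matrix), and $^\top$ denotes transposition. *)

From HB Require Import structures.
From mathcomp Require Import all_boot all_order all_algebra.
From mathcomp Require Import all_classical all_reals all_analysis.
Set Implicit Arguments. Unset Strict Implicit. Unset Printing Implicit Defensive.
Import Order.TTheory GRing.Theory Num.Theory numFieldNormedType.Exports.
Local Open Scope classical_set_scope.
Local Open Scope ring_scope.

Section Defs.
Context {R : realType}.

Definition evec (n : nat) (j : 'I_n) : 'rV[R]_n := delta_mx 0 j.

Fixpoint Ck_vec (n : nat) {W : normedModType R} (k : nat) (f : 'rV[R]_n -> W) : Prop :=
  match k with
  | 0 => continuous f
  | k'.+1 => (forall x, differentiable f x) /\ (forall j : 'I_n, Ck_vec k' ('D_(evec j) f))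
  end.
Definition smooth_vec (n : nat) {W : normedModType R} (f : 'rV[R]_n -> W) :=
  forall k, Ck_vec k f.

Fixpoint Ck_real {W : normedModType R} (k : nat) (f : R -> W) : Prop :=
  match k with
  | 0 => continuous f
  | k'.+1 => (forall t, derivable f t 1) /\ Ck_real k' ('D_1 f)
  end.
Definition smooth_real {W : normedModType R} (f : R -> W) := forall k, Ck_real k f.

(* The Jacobian g'(q) (an m x n matrix) is the transpose of the library's
   row-vector convention jacobian: 'J g q := lin1_mx ('d g q) : 'M_(n, m). *)

Definition sqnorm (n : nat) (v : 'rV[R]_n) : R := \sum_(i < n) (v 0 i) ^+ 2.
Definition dotp (n : nat) (v w : 'rV[R]_n) : R := \sum_(i < n) v 0 i * w 0 i.

Definition oint0 (f : R -> R) (t : R) : R :=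
  Rintegral lebesgue_measure `[0, t] f - Rintegral lebesgue_measure `[t, 0] f.

(* associated state: q(t) = q0 + int_0^t u, i.e. the solution of qdot = u, q(0) = q0 *)
Definition state (n : nat) (q0 : 'rV[R]_n) (u : R -> 'rV[R]_n) (t : R) : 'rV[R]_n :=
  q0 + \row_(i < n) oint0 (fun s => u s 0 i) t.

Definition cost (n m : nat) (g : 'rV[R]_n -> 'rV[R]_m) (q0 : 'rV[R]_n)
  (u : R -> 'rV[R]_n) (lam : R -> 'rV[R]_m) : R :=
  Rintegral lebesgue_measure `[0, 1]
    (fun t => 2^-1 * sqnorm (u t) - dotp (g (state q0 u t)) (lam t)).

Definition admissible (n m : nat) (q0 qN : 'rV[R]_n)
  (u : R -> 'rV[R]_n) (lam : R -> 'rV[R]_m) : Prop :=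
  smooth_real u /\ smooth_real lam /\ state q0 u 1 = qN.

(* optimal (= extremal) control: admissible, and the first variation of J
   vanishes in every admissible smooth direction *)
Definition extremal (n m : nat) (g : 'rV[R]_n -> 'rV[R]_m) (q0 qN : 'rV[R]_n)
  (u : R -> 'rV[R]_n) (lam : R -> 'rV[R]_m) : Prop :=
  admissible q0 qN u lam /\
  forall (du : R -> 'rV[R]_n) (dlam : R -> 'rV[R]_m),
    (forall e : R, admissible q0 qN (fun t => u t + e *: du t) (fun t => lam t + e *: dlam t)) ->
    is_derive (0 : R) 1
      (fun e : R => cost g q0 (fun t => u t + e *: du t) (fun t => lam t + e *: dlam t)) 0.

End Defs.

(* The state is q(t) = q0 + int_0^t u, so q' = u, and the costate can be taken to
   be p = u itself.  For smooth variations (Q, dl) with Q(0) = Q(1) = 0, the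
   perturbed controls (u + e Q', lam + e dl) are admissible with state q + e Q, and
   differentiating the cost under the integral sign at e = 0 gives the first variation
     int_0^1 <u, Q'> - <g'(q) Q, lam> - <g(q), dl> = 0.
   With Q = 0 and dl = -g(q) this is int_0^1 |g(q)|^2 = 0, hence g(q) = 0.  With
   dl = 0, an integration by parts turns it into int_0^1 <Q, u' + g'(q)^T lam> = 0,
   and the choice Q = t(1 - t)(u' + g'(q)^T lam) forces u' = -g'(q)^T lam on [0, 1]. *)

From HB Require Import structures.
From mathcomp Require Import all_boot all_order all_algebra.
From mathcomp Require Import all_classical all_reals all_analysis.
From mathcomp Require Import lra ring.
Import Order.TTheory GRing.Theory Num.Theory numFieldNormedType.Exports.
Local Open Scope classical_set_scope.
Local Open Scope ring_scope.

Section oriented_integral.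
Context {R : realType}.
Notation mu := (@lebesgue_measure R).

Lemma oint0_0 (f : R -> R) : oint0 f 0 = 0.
Proof. by rewrite /oint0 set_itv1 Rintegral_set1 subrr. Qed.

Lemma oint0_ge0 (f : R -> R) s : 0 <= s -> oint0 f s = \int[mu]_(x in `[0, s]) f x.
Proof.
rewrite le_eqVlt => /predU1P[<-|s0]; first by rewrite oint0_0 set_itv1 Rintegral_set1.
by rewrite /oint0 (@set_itv_ge _ _ (BLeft s) (BRight 0)) ?Rintegral_set0 ?subr0// bnd_simp -ltNge.
Qed.

Lemma oint0_lt0 (f : R -> R) s : s < 0 -> oint0 f s = - \int[mu]_(x in `[s, 0]) f x.
Proof.
move=> s0; rewrite /oint0 (@set_itv_ge _ _ (BLeft 0) (BRight s)) ?Rintegral_set0 ?sub0r//.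
by rewrite bnd_simp -ltNge.
Qed.

Lemma continuous_integrable_itv (f : R -> R) a b :
  continuous f -> mu.-integrable `[a, b] (EFin \o f).
Proof.
move=> cf; apply: continuous_compact_integrable; first exact: segment_compact.
exact: continuous_subspaceT.
Qed.

Lemma is_derive_oint0 (f : R -> R) (t : R) :
  continuous f -> is_derive t 1 (oint0 f) (f t).
Proof.
move=> cf.
pose a := Num.min t 0 - 1; pose b := Num.max t 0 + 1.
pose F s := \int[mu]_(x in `[a, s]) f x.
have mt : Num.min t 0 <= t by rewrite ge_min lexx.
have m0 : Num.min t 0 <= 0 by rewrite ge_min lexx orbT.
have Mt : t <= Num.max t 0 by rewrite le_max lexx.
have at0 : a < t by rewrite /a; lra.
have a0 : a < 0 by rewrite /a; lra.
have tb : t < b by rewrite /b; lra.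
have intf c d : mu.-integrable `[c, d] (EFin \o f) by exact: continuous_integrable_itv.
have [dF F'] := continuous_FTC1_closed tb (intf a b) at0 (cf t).
have FE : \near t, F t - F 0 = oint0 f t.
  near=> s; have as_ : a < s by near: s; exact: lt_nbhsr.
  have [s0|s0] := leP 0 s.
    rewrite oint0_ge0 // /F (@Rintegral_itvB _ f (BLeft a) (BRight s) 0); last 3 first.
    - exact: intf.
    - by rewrite bnd_simp ltW.
    - by rewrite bnd_simp.
    rewrite Rintegral_itv_obnd_cbnd //.
    by apply: integrableS (intf 0 s) => //; apply: subset_itvr; rewrite bnd_simp.
  rewrite oint0_lt0 // /F -opprB (@Rintegral_itvB _ f (BLeft a) (BRight 0) s); last 3 first.
  - exact: intf.
  - by rewrite bnd_simp ltW.
  - by rewrite bnd_simp ltW.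
  rewrite Rintegral_itv_obnd_cbnd //.
  by apply: integrableS (intf s 0) => //; apply: subset_itvr; rewrite bnd_simp.
apply: near_eq_is_derive FE _; rewrite -[f t]subr0.
by apply: is_deriveB; apply: DeriveDef => //; rewrite -derive1E.
Unshelve. all: by end_near. Qed.

Lemma oint0_antiderivative {h H : R -> R} (t : R) : continuous h ->
  (forall s : R, is_derive s 1 H (h s)) -> oint0 h t = H t - H 0.
Proof.
move=> ch dH.
have dD s : is_derive s (1 : R) (oint0 h - H) 0.
  by rewrite -(subrr (h s)); apply: is_deriveB => //; exact: is_derive_oint0.
have := is_derive_0_is_cst t 0 dD.
by rewrite !fctE oint0_0 sub0r => /eqP; rewrite subr_eq => /eqP ->; ring.
Qed.

Lemma Rintegral01_antiderivative {h H : R -> R} : continuous h ->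
  (forall s : R, is_derive s 1 H (h s)) -> \int[mu]_(x in `[0, 1]) h x = H 1 - H 0.
Proof. by move=> ch dH; rewrite -oint0_ge0 // oint0_antiderivative. Qed.

End oriented_integral.

Section vanishing.
Context {R : realType}.
Notation mu := (@lebesgue_measure R).

Lemma continuous_eq0_itvcc {V : normedModType R} {f : R -> V} {a b : R} : a < b ->
  continuous f -> {in `]a, b[, forall t, f t = 0} -> {in `[a, b], forall t, f t = 0}.
Proof.
move=> ab cf f0 t; rewrite in_itv /= => /andP[ta tb].
have [tltb|] := ltP t b.
  suff : f x @[x --> t^'+] --> 0 by exact: (cvg_unique _ (cvg_at_right_filter (cf t))).
  apply: cvg_near_cst; near=> x; apply: f0; rewrite in_itv /=; apply/andP; split.
    by apply: (le_lt_trans ta); near: x; exact: nbhs_right_gt.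
  by near: x; exact: nbhs_right_lt.
move=> btle; have -> : t = b by apply/eqP; rewrite eq_le tb btle.
suff : f x @[x --> b^'-] --> 0 by exact: (cvg_unique _ (cvg_at_left_filter (cf b))).
apply: cvg_near_cst; near=> x; apply: f0; rewrite in_itv /=; apply/andP; split.
  by near: x; exact: nbhs_left_gt.
by near: x; exact: nbhs_left_lt.
Unshelve. all: by end_near. Qed.

Lemma Rintegral01_ge0_eq0 (h : R -> R) : continuous h ->
  {in `[0, 1], forall t, 0 <= h t} -> \int[mu]_(x in `[0, 1]) h x = 0 ->
  {in `[0, 1], forall t, h t = 0}.
Proof.
move=> ch h0 int0; apply: continuous_eq0_itvcc => // s.
pose H := oint0 h; have dH (x : R) : is_derive x 1 H (h x) by exact: is_derive_oint0.
have H_ndecr x y : 0 <= x -> x <= y -> y <= 1 -> H x <= H y.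
  apply: ger0_derive1_ndecr => [z _|z|].
  - by have [] := dH z.
  - by move=> /subset_itv_oo_cc z01; rewrite derive1E; have [_ ->] := dH z; exact: h0.
  apply: continuous_subspaceT => z; apply: differentiable_continuous.
  by apply/derivable1_diffP; have [] := dH z.
have H0 : H 0 = 0 by exact: oint0_0.
have H1 : H 1 = 0 by rewrite /H oint0_ge0.
have Hs x : x \in `]0, 1[ -> H x = 0.
  rewrite in_itv /= => /andP[/ltW x0 /ltW x1].
  by apply/eqP; rewrite eq_le -{1}H1 -H0 !H_ndecr.
move=> s01; have Hnear : \near s, cst 0 s = H s.
  near=> x; rewrite Hs // in_itv /=; apply/andP; split.
    by near: x; apply: lt_nbhsr; move: s01; rewrite in_itv => /andP[].
  by near: x; apply: lt_nbhsl; move: s01; rewrite in_itv => /andP[].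
have [_ <-] := dH s.
by have [_ ->] := near_eq_is_derive Hnear (is_derive_cst (0 : R) s 1).
Unshelve. all: by end_near. Qed.

End vanishing.

Section elementary_calculus.
Context {R : realType}.

Lemma continuous_entry {T : topologicalType} {p r : nat} {F : T -> 'M[R]_(p, r)} i j :
  continuous F -> continuous (fun x => F x i j).
Proof. by move=> cF x; exact: (continuous_comp (cF x) (@coord_continuous R p r i j (F x))). Qed.

Lemma continuous_sum {T : topologicalType} {V : normedModType R} I (r : seq I) (P : pred I)
  (F : I -> T -> V) :
  (forall i, P i -> continuous (F i)) -> continuous (fun x => \sum_(i <- r | P i) F i x).
Proof.
move=> cF; elim: r => [|i r IH].
  by under [X in continuous X]funext do rewrite big_nil; move=> x; exact: cvg_cst.
under [X in continuous X]funext do rewrite big_cons.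
by case Pi: (P i) => // x; apply: cvgD; [exact: cF | exact: IH].
Qed.

Lemma is_derive_entry {V : normedModType R} {p r : nat} {F : V -> 'M[R]_(p, r)} {x v : V} {d}
  (i : 'I_p) (j : 'I_r) :
  is_derive x v F d -> is_derive x v (fun y => F y i j) (d i j).
Proof.
move=> [dF <-]; apply: DeriveDef; first by move/derivable_mxP : dF; apply.
by rewrite derive_mx // mxE.
Qed.

Lemma is_derive_entries {V : normedModType R} {p r : nat} (F : V -> 'M[R]_(p, r)) x v
  (d : 'M[R]_(p, r)) :
  (forall i j, is_derive x v (fun y => F y i j) (d i j)) -> is_derive x v F d.
Proof.
move=> dF; have dFx : derivable F x v by apply/derivable_mxP => i j; have [] := dF i j.
apply: DeriveDef; rewrite // derive_mx //.
by apply/matrixP => i j; rewrite mxE; have [_ ->] := dF i j.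
Qed.

Lemma continuous_line {T : topologicalType} {V : normedModType R}
    {a : T -> R} {F G : T -> V} :
  continuous a -> continuous F -> continuous G -> continuous (fun x => F x + a x *: G x).
Proof. by move=> ca cF cG x; apply: cvgD; [exact: cF | apply: cvgZ; [exact: ca | exact: cG]]. Qed.

Lemma continuous_snd {V : normedModType R} {F : R -> V} :
  continuous F -> continuous (fun p : R * R => F p.2).
Proof. by move=> cF p; exact: continuous_comp cvg_snd (cF _). Qed.

End elementary_calculus.

Section Ck_real_closure.
Context {R : realType} {W : normedModType R}.
Implicit Types f g : R -> W.

Lemma Ck_realS k f : Ck_real k.+1 f -> Ck_real k f.
Proof.
elim: k f => [|k IH] f /= [df Hf].
  by move=> x; apply/differentiable_continuous/derivable1_diffP.
by split => //; apply: IH.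
Qed.

Lemma Ck_real_cst k (c : W) : Ck_real k (fun=> c).
Proof.
elim: k c => [|k IH] c /=; first by move=> x; exact: cvg_cst.
split=> [t|]; first exact: derivable_cst.
by have -> : 'D_1 (fun _ : R => c) = (fun=> 0) by apply/funext => t; exact: derive_cst.
Qed.

Lemma Ck_realD k f g : Ck_real k f -> Ck_real k g -> Ck_real k (fun t => f t + g t).
Proof.
elim: k f g => [|k IH] f g /=; first by move=> cf cg x; apply: cvgD; [exact: cf | exact: cg].
move=> [df Hf] [dg Hg]; split=> [t|]; first exact: derivableD.
have -> : 'D_1 (fun t => f t + g t) = (fun t => 'D_1 f t + 'D_1 g t).
  by apply/funext => t; exact: deriveD.
exact: IH.
Qed.

Lemma Ck_real_sum k I (r : seq I) (P : pred I) (F : I -> R -> W) :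
  (forall i, P i -> Ck_real k (F i)) -> Ck_real k (fun t => \sum_(i <- r | P i) F i t).
Proof.
move=> CkF; elim: r => [|i r IH].
  by under [X in Ck_real _ X]funext do rewrite big_nil; exact: Ck_real_cst.
under [X in Ck_real _ X]funext do rewrite big_cons.
by case Pi: (P i) => //; apply: Ck_realD => //; exact: CkF.
Qed.

End Ck_real_closure.

Section Ck_real_algebra.
Context {R : realType}.

Lemma Ck_realM k (a b : R -> R) :
  Ck_real k a -> Ck_real k b -> Ck_real k (fun t => a t * b t).
Proof.
elim: k a b => [|k IH] a b /=.
  by move=> ca cb x; apply: cvgM; [exact: ca | exact: cb].
move=> [da Ha] [db Hb]; split=> [t|]; first exact: derivableM.
have -> : 'D_1 (fun t => a t * b t) = (fun t => a t * 'D_1 b t + 'D_1 a t * b t).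
  by apply/funext => t; rewrite deriveM // /GRing.scale /= [_ * b t]mulrC.
by apply: Ck_realD; apply: IH => //; apply: Ck_realS.
Qed.

Lemma Ck_real_id k : Ck_real k (@id R).
Proof.
case: k => [|k] /=; first by move=> x.
split=> [t|]; first exact: derivable_id.
have -> : 'D_1 (@id R) = (fun=> 1) by apply/funext => t; exact: derive_id.
exact: Ck_real_cst.
Qed.

Lemma Ck_real_mxP k p r (f : R -> 'M[R]_(p, r)) :
  Ck_real k f <-> forall i j, Ck_real k (fun t => f t i j).
Proof.
elim: k f => [|k IH] f /=.
  split=> [cf i j|cf t]; first exact: continuous_entry.
  apply/cvgrPdist_le => e e0; near=> x.
  rewrite [leLHS]/Num.Def.normr /= mx_normrE (bigmax_le _ (ltW e0)) //= => ij _.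
  rewrite !mxE; move: ij; near: x; apply: filter_forall => -[i j].
  by move/cvgrPdist_le : (cf i j t) => /(_ e e0).
have Dentry (df : forall t, derivable f t 1) i j :
    (fun t => 'D_1 f t i j) = 'D_1 (fun t => f t i j).
  by apply/funext => t; rewrite derive_mx // mxE.
split=> [[df Hf] i j|Hf].
  split=> [t|]; first by move/derivable_mxP : (df t); apply.
  by rewrite -Dentry //; exact: (IH ('D_1 f)).1.
have df t : derivable f t 1 by apply/derivable_mxP => i j; exact: (Hf i j).1.
by split=> //; apply/IH => i j; rewrite Dentry //; exact: (Hf i j).2.
Unshelve. all: by end_near. Qed.

Lemma Ck_realZ k p r (a : R -> R) (f : R -> 'M[R]_(p, r)) :
  Ck_real k a -> Ck_real k f -> Ck_real k (fun t => a t *: f t).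
Proof.
move=> Cka /Ck_real_mxP Ckf; apply/Ck_real_mxP => i j.
by under [X in Ck_real _ X]funext do rewrite mxE; exact: Ck_realM.
Qed.

End Ck_real_algebra.

Section Ck_vec_closure.
Context {R : realType} {n : nat}.

Lemma derive_rV_evec {W : normedModType R} (f : 'rV[R]_n -> W) (x v : 'rV[R]_n) :
  differentiable f x -> 'D_v f x = \sum_(j < n) v 0 j *: 'D_(evec j) f x.
Proof.
move=> df; rewrite deriveE // [in LHS](row_sum_delta v) linear_sum.
by apply: eq_bigr => j _; rewrite linearZ /= -deriveE.
Qed.

Lemma Ck_vec_entry k p r (f : 'rV[R]_n -> 'M[R]_(p, r)) i j :
  Ck_vec k f -> Ck_vec k (fun x => f x i j).
Proof.
elim: k f => [|k IH] f /=.
  exact: continuous_entry.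
move=> [df Hf]; split=> [x|j'].
  by apply: (@differentiable_comp _ _ _ _ f (fun M : 'M[R]_(p, r) => M i j)) => //;
    exact: differentiable_coord.
have -> : 'D_(evec j') (fun x => f x i j) = (fun x => 'D_(evec j') f x i j).
  by apply/funext => x; rewrite derive_mx ?mxE //; exact: diff_derivable.
exact: IH.
Qed.

Lemma Ck_real_comp k (f : 'rV[R]_n -> R) (c : R -> 'rV[R]_n) :
  Ck_vec k f -> Ck_real k c -> Ck_real k (fun t => f (c t)).
Proof.
elim: k f c => [|k IH] f c /=.
  by move=> cf cc x; exact: (continuous_comp (cc x) (cf (c x))).
move=> [df Hf] [dc Hc].
have dc' t : differentiable c t by exact/derivable1_diffP.
have dfc t : differentiable (f \o c) t by apply: differentiable_comp; [exact: dc' | exact: df].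
split=> [t|]; first exact/derivable1_diffP.
have -> : 'D_1 (fun t => f (c t)) = (fun t => \sum_(j < n) 'D_1 c t 0 j * 'D_(evec j) f (c t)).
  apply/funext => t; rewrite -[in RHS](derive_rV_evec f (c t) ('D_1 c t) (df (c t))).
  change ('D_1 (f \o c) t = 'D_('D_1 c t) f (c t)).
  by rewrite deriveE // diff_comp // (@deriveE _ _ _ f) // (@deriveE _ _ _ c).
apply: Ck_real_sum => j _; apply: Ck_realM; first by move/Ck_real_mxP : Hc; apply.
by apply: IH (Hf j) _; apply: Ck_realS.
Qed.

End Ck_vec_closure.

Lemma Ck_real_comp_mx {R : realType} {n p r : nat} k (f : 'rV[R]_n -> 'M[R]_(p, r))
    (c : R -> 'rV[R]_n) :
  Ck_vec k f -> Ck_real k c -> Ck_real k (fun t => f (c t)).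
Proof.
move=> Ckf Ckc; apply/Ck_real_mxP => i j.
by apply: (Ck_real_comp k (fun x => f x i j) c) => //; exact: Ck_vec_entry.
Qed.

Lemma jacobianE {R : realType} {n m : nat} (f : 'rV[R]_n -> 'rV[R]_m) x i j :
  differentiable f x -> 'J f x i j = 'D_(evec i) f x 0 j.
Proof. by move=> df; rewrite deriveEjacobian // /evec -rowE !mxE. Qed.

Section dot_product.
Context {R : realType} {n : nat}.
Implicit Types v w : 'rV[R]_n.

Lemma dotpE v w : dotp v w = (v *m w^T) 0 0.
Proof. by rewrite /dotp mxE; apply: eq_bigr => i _; rewrite mxE. Qed.

Lemma sqnormE v : sqnorm v = dotp v v.
Proof. by apply: eq_bigr => i _; rewrite expr2. Qed.

Lemma dotpC v w : dotp v w = dotp w v.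
Proof. by apply: eq_bigr => i _; rewrite mulrC. Qed.

Lemma dotp0r v : dotp v 0 = 0.
Proof. by rewrite dotpE trmx0 mulmx0 mxE. Qed.

Lemma dotp0l w : dotp 0 w = 0.
Proof. by rewrite dotpC dotp0r. Qed.

Lemma dotpDr u v w : dotp u (v + w) = dotp u v + dotp u w.
Proof. by rewrite !dotpE linearD mulmxDr mxE. Qed.

Lemma dotpZr a v w : dotp v (a *: w) = a * dotp v w.
Proof. by rewrite !dotpE linearZ /= -scalemxAr mxE. Qed.

Lemma dotpp_ge0 v : 0 <= dotp v v.
Proof. by apply: sumr_ge0 => i _; rewrite -expr2 sqr_ge0. Qed.

Lemma dotpp_eq0 v : (dotp v v == 0) = (v == 0).
Proof.
apply/idP/eqP => [/eqP|->]; last by rewrite dotp0r.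
move/psumr_eq0P => v0; apply/rowP => i; rewrite mxE.
by apply/eqP; rewrite -sqrf_eq0 expr2 v0 // => j _; rewrite -expr2 sqr_ge0.
Qed.

End dot_product.

Lemma dotp_mulmxl {R : realType} p n (v : 'rV[R]_p) (A : 'M[R]_(p, n)) (w : 'rV[R]_n) :
  dotp (v *m A) w = dotp v (w *m A^T).
Proof. by rewrite !dotpE trmx_mul trmxK mulmxA. Qed.

Section dotp_calculus.
Context {R : realType} {n : nat}.

Lemma is_derive_dotp {V : normedModType R} {F G : V -> 'rV[R]_n} {x v : V} {dF dG : 'rV[R]_n} :
  is_derive x v F dF -> is_derive x v G dG ->
  is_derive x v (fun y => dotp (F y) (G y)) (dotp dF (G x) + dotp (F x) dG).
Proof.
move=> hF hG; rewrite /dotp -big_split /=.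
have -> : (fun y => \sum_(i < n) F y 0 i * G y 0 i) = \sum_(i < n) (fun y => F y 0 i * G y 0 i).
  by apply/funext => y; rewrite fct_sumE.
apply: is_derive_sum => i.
have := is_deriveM (is_derive_entry 0 i hF) (is_derive_entry 0 i hG).
by rewrite /GRing.scale /= addrC [G x 0 i * _]mulrC; apply.
Qed.

Lemma continuous_dotp {T : topologicalType} {F G : T -> 'rV[R]_n} :
  continuous F -> continuous G -> continuous (fun x => dotp (F x) (G x)).
Proof.
move=> cF cG; apply: continuous_sum => i _ x.
by apply: cvgM; exact: continuous_entry.
Qed.

End dotp_calculus.

Section derivation_under_integral.
Context {R : realType}.
Notation mu := (@lebesgue_measure R).

Lemma is_derive0_Rintegral01 {f P : R -> R -> R} :
  (forall e, continuous (f e)) -> (forall e t : R, is_derive e 1 (f^~ t) (P e t)) ->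
  continuous (fun p : R * R => P p.1 p.2) ->
  is_derive (0 : R) 1 (fun e => \int[mu]_(t in `[0, 1]) f e t) (\int[mu]_(t in `[0, 1]) P 0 t).
Proof.
move=> cf dP cP.
have cK : compact (`[-1, 1] `*` `[0, 1] : set (R * R)).
  by apply: compact_setX; exact: segment_compact.
have /compact_bounded[M [_ PM]] := continuous_compact (continuous_subspaceT cP) cK.
pose G : R -> R := cst (`|M| + 1).
have MG : M < `|M| + 1 by rewrite (le_lt_trans (ler_norm M)) // ltrDl.
have Ia : `]-1, 1[%classic (0 : R) by rewrite /= in_itv /= ltrN10 ltr01.
have intf e : `]-1, 1[%classic e -> mu.-integrable `[0, 1] (EFin \o f e).
  by move=> _; exact: continuous_integrable_itv.
have derf1 e t : `]-1, 1[%classic e -> `[0, 1]%classic t -> derivable (f^~ t) e 1.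
  by have [] := dP e t.
have Gub e t : `]-1, 1[%classic e -> `[0, 1]%classic t -> `|partial1of2 f e t| <= G t.
  move=> /= e11 t01; rewrite partial1of2E; have [_ ->] := dP e t.
  by apply: (PM _ MG); exists (e, t) => //; split => //=; exact: subset_itv_oo_cc.
have G0 t : 0 <= G t by rewrite /G /= addr_ge0.
have intG : mu.-integrable `[0, 1] (EFin \o G).
  by apply: continuous_integrable_itv; exact: cst_continuous.
have mB : measurable (`[0, 1] : set R) by exact: measurable_itv.
apply: DeriveDef.
  exact: (@derivable_under_integral R _ _ mu f _ mB 0 (-1) 1 Ia intf derf1 G G0 intG Gub).
rewrite -derive1E.
rewrite (@differentiation_under_integral R _ _ mu f _ mB 0 (-1) 1 Ia intf derf1 G G0 intG Gub).
by apply: eq_Rintegral => t _; rewrite partial1of2E; have [_ ->] := dP 0 t.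
Qed.

End derivation_under_integral.

Section state.
Context {R : realType} {n : nat} (q0 : 'rV[R]_n).

Lemma is_derive_state (u : R -> 'rV[R]_n) (t : R) :
  continuous u -> is_derive t 1 (state q0 u) (u t).
Proof.
move=> cu; apply: is_derive_entries => i j; rewrite (ord1 i).
have -> : (fun s => state q0 u s 0 j) = (fun s => q0 0 j + oint0 (fun s => u s 0 j) s).
  by apply/funext => s; rewrite !mxE.
have cuj := continuous_entry 0 j cu.
by have := is_deriveD (is_derive_cst (q0 0 j) t 1) (is_derive_oint0 _ t cuj); rewrite add0r.
Qed.

Lemma smooth_state (u : R -> 'rV[R]_n) : smooth_real u -> smooth_real (state q0 u).
Proof.
move=> su; have dq (t : R) : is_derive t 1 (state q0 u) (u t) := is_derive_state u t (su 0%N).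
have Ck1 k : Ck_real k.+1 (state q0 u).
  split=> [t|]; first by have [] := dq t.
  by have -> : 'D_1 (state q0 u) = u by apply/funext => t; have [_ ->] := dq t.
by case=> [|k]; [exact: Ck_realS (Ck1 0%N) | exact: Ck1].
Qed.

Lemma state_perturb {u du Q : R -> 'rV[R]_n} (e t : R) : continuous u -> continuous du ->
  (forall s : R, is_derive s 1 Q (du s)) ->
  state q0 (fun s => u s + e *: du s) t = state q0 u t + e *: (Q t - Q 0).
Proof.
move=> cu cdu dQ; apply/matrixP => i j; rewrite (ord1 i) !mxE -addrA; congr (_ + _).
pose H s := oint0 (fun s => u s 0 j) s + e * Q s 0 j.
have dH (s : R) : is_derive s 1 H (u s 0 j + e * du s 0 j).
  have cuj := continuous_entry 0 j cu.
  exact: is_deriveD (is_derive_oint0 _ s cuj) (is_deriveZ e (is_derive_entry 0 j (dQ s))).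
have ch : continuous (fun s => u s 0 j + e * du s 0 j).
  by move=> s; apply: cvgD; [|apply: cvgM; [exact: cvg_cst|]]; exact: continuous_entry.
under eq_fun do rewrite !mxE.
rewrite (oint0_antiderivative t ch dH) /H oint0_0; ring.
Qed.

End state.

Section line_derivative.
Context {R : realType} {V W : normedModType R}.

Lemma is_derive_along_line {f : V -> W} {x y : V} {e : R} :
  derivable f (x + e *: y) y ->
  is_derive e 1 (fun e => f (x + e *: y)) ('D_y f (x + e *: y)).
Proof.
move=> df.
have shiftE : (fun h : R => h^-1 *: (f (x + (h *: 1 + e) *: y) - f (x + e *: y))) =
    (fun h : R => h^-1 *: (f (h *: y + (x + e *: y)) - f (x + e *: y))).
  apply/funext => h; congr (_ *: (f _ - _)).
  by rewrite [h *: 1]mulr1 scalerDl addrCA addrA.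
by apply: DeriveDef; rewrite /derivable /derive shiftE.
Qed.

End line_derivative.

Lemma is_derive_line {R : realType} {V : normedModType R} (x y : V) (e : R) :
  is_derive e 1 (fun e => x + e *: y) y.
Proof.
by have := @is_derive_along_line _ _ _ id x y e (@derivable_id _ V _ _); rewrite derive_id.
Qed.

Section lagrangian.
Context {R : realType} {n m : nat} (g : 'rV[R]_n -> 'rV[R]_m).

Definition lagrangian (x u : 'rV[R]_n) (l : 'rV[R]_m) : R := 2^-1 * sqnorm u - dotp (g x) l.

Definition lagrangian_variation (x dx u du : 'rV[R]_n) (l dl : 'rV[R]_m) : R :=
  dotp u du - (dotp ('D_dx g x) l + dotp (g x) dl).

Lemma is_derive_lagrangian (x dx u du : 'rV[R]_n) (l dl : 'rV[R]_m) (e : R) :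
  differentiable g (x + e *: dx) ->
  is_derive e 1 (fun e => lagrangian (x + e *: dx) (u + e *: du) (l + e *: dl))
    (lagrangian_variation (x + e *: dx) dx (u + e *: du) du (l + e *: dl) dl).
Proof.
move=> dg; have dgx := is_derive_along_line (diff_derivable (v := dx) dg).
have dsq := is_derive_dotp (is_derive_line u du e) (is_derive_line u du e).
have dL := is_deriveB (is_deriveZ 2^-1 dsq) (is_derive_dotp dgx (is_derive_line l dl e)).
rewrite /lagrangian; under eq_fun do rewrite sqnormE.
apply: is_derive_eq dL _; rewrite [dotp du _]dotpC -mulr2n.
set d := dotp _ du.
by rewrite -[_ *: _]/(2^-1 * (d *+ 2)) /lagrangian_variation -/d; field.
Qed.

Lemma continuous_lagrangian {T : topologicalType} (X U : T -> 'rV[R]_n) (L : T -> 'rV[R]_m) :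
  continuous g -> continuous X -> continuous U -> continuous L ->
  continuous (fun t => lagrangian (X t) (U t) (L t)).
Proof.
move=> cg cX cU cL t; rewrite /lagrangian; under eq_fun do rewrite sqnormE.
apply: cvgB; first by apply: cvgM; [exact: cvg_cst | exact: (continuous_dotp cU cU t)].
apply: (continuous_dotp _ cL t) => x; exact: continuous_comp (cX x) (cg (X x)).
Qed.

Lemma continuous_lagrangian_variation {T : topologicalType} (X dX U dU : T -> 'rV[R]_n)
    (L dL : T -> 'rV[R]_m) :
  Ck_vec 1 g -> continuous X -> continuous dX -> continuous U -> continuous dU ->
  continuous L -> continuous dL ->
  continuous (fun t => lagrangian_variation (X t) (dX t) (U t) (dU t) (L t) (dL t)).
Proof.
move=> [dg cDg] cX cdX cU cdU cL cdL t; rewrite /lagrangian_variation.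
have cgX : continuous (fun t => g (X t)).
  by move=> x; exact: continuous_comp (cX x) (differentiable_continuous (dg (X x))).
have cDgX : continuous (fun t => 'D_(dX t) g (X t)).
  under eq_fun do rewrite derive_rV_evec //.
  apply: continuous_sum => j _ x; apply: cvgZ; first exact: continuous_entry.
  exact: continuous_comp (cX x) (cDg j (X x)).
apply: cvgB; first exact: (continuous_dotp cU cdU t).
by apply: cvgD; [exact: (continuous_dotp cDgX cL t) | exact: (continuous_dotp cgX cdL t)].
Qed.

End lagrangian.

Lemma Rintegral01_dotp_by_parts {R : realType} {n : nat} (c Q : R -> 'rV[R]_n) :
  Ck_real 1 c -> Ck_real 1 Q -> Q 0 = 0 -> Q 1 = 0 ->
  \int[lebesgue_measure]_(t in `[0, 1]) (dotp ('D_1 c t) (Q t) + dotp (c t) ('D_1 Q t)) = 0.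
Proof.
move=> Cc CQ Q0 Q1.
have dc (t : R) : is_derive t 1 c ('D_1 c t) by apply: derivableP; exact: Cc.1.
have dQ (t : R) : is_derive t 1 Q ('D_1 Q t) by apply: derivableP; exact: CQ.1.
have ch : continuous (fun t => dotp ('D_1 c t) (Q t) + dotp (c t) ('D_1 Q t)).
  have [cc cQ] : continuous c /\ continuous Q by split; apply: (@Ck_realS _ _ 0).
  have [cc' cQ'] : continuous ('D_1 c) /\ continuous ('D_1 Q) by split; [exact: Cc.2|exact: CQ.2].
  move=> t; apply: cvgD; first exact: (continuous_dotp cc' cQ t).
  exact: (continuous_dotp cc cQ' t).
rewrite (Rintegral01_antiderivative ch (fun t => is_derive_dotp (dc t) (dQ t))).
by rewrite Q0 Q1 !dotp0r subrr.
Qed.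

Section extremal_control.
Context {R : realType} {n m : nat} {g : 'rV[R]_n -> 'rV[R]_m} {q0 qN : 'rV[R]_n}
  {u : R -> 'rV[R]_n} {lam : R -> 'rV[R]_m}.
Hypotheses (hg : smooth_vec g) (hopt : extremal g q0 qN u lam).
Notation mu := (@lebesgue_measure R).
Local Notation q := (state q0 u).

Let su : smooth_real u := hopt.1.1.
Let sl : smooth_real lam := hopt.1.2.1.
Let sq : smooth_real q := smooth_state q0 u su.

Lemma state_variation (Q : R -> 'rV[R]_n) (e t : R) : smooth_real Q -> Q 0 = 0 ->
  state q0 (fun t => u t + e *: 'D_1 Q t) t = q t + e *: Q t.
Proof.
move=> sQ Q0; have dQ (s : R) : is_derive s 1 Q ('D_1 Q s).
  by apply: derivableP; exact: (sQ 1%N).1.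
by rewrite (state_perturb q0 e t (su 0%N) (sQ 1%N).2 dQ) Q0 subr0.
Qed.

Lemma admissible_variation (Q : R -> 'rV[R]_n) (dl : R -> 'rV[R]_m) (e : R) :
  smooth_real Q -> smooth_real dl -> Q 0 = 0 -> Q 1 = 0 ->
  admissible q0 qN (fun t => u t + e *: 'D_1 Q t) (fun t => lam t + e *: dl t).
Proof.
move=> sQ sdl Q0 Q1; split; [|split].
- move=> k; apply: Ck_realD; first exact: su.
  by apply: Ck_realZ; [exact: Ck_real_cst | exact: (sQ k.+1).2].
- move=> k; apply: Ck_realD; first exact: sl.
  by apply: Ck_realZ; [exact: Ck_real_cst | exact: sdl].
- by rewrite state_variation // Q1 scaler0 addr0; exact: hopt.1.2.2.
Qed.

Lemma first_variation (Q : R -> 'rV[R]_n) (dl : R -> 'rV[R]_m) :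
  smooth_real Q -> smooth_real dl -> Q 0 = 0 -> Q 1 = 0 ->
  \int[mu]_(t in `[0, 1]) lagrangian_variation g (q t) (Q t) (u t) ('D_1 Q t) (lam t) (dl t) = 0.
Proof.
move=> sQ sdl Q0 Q1; pose du := 'D_1 Q.
have [cq cQ cdu] : [/\ continuous q, continuous Q & continuous du].
  by split; [exact: (sq 0%N) | exact: (sQ 0%N) | exact: (sQ 1%N).2].
have [cu cl cdl] : [/\ continuous u, continuous lam & continuous dl].
  by split; [exact: (su 0%N) | exact: (sl 0%N) | exact: (sdl 0%N)].
pose f e t := lagrangian g (q t + e *: Q t) (u t + e *: du t) (lam t + e *: dl t).
pose P e t := lagrangian_variation g (q t + e *: Q t) (Q t)
  (u t + e *: du t) (du t) (lam t + e *: dl t) (dl t).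
have df (e t : R) : is_derive e 1 (f^~ t) (P e t).
  by apply: is_derive_lagrangian; exact: (hg 1%N).1.
have cf e : continuous (f e).
  have ce : continuous (fun _ : R => e) by move=> x; exact: cvg_cst.
  apply: continuous_lagrangian; first exact: (hg 0%N).
  - exact: (continuous_line ce cq cQ).
  - exact: (continuous_line ce cu cdu).
  - exact: (continuous_line ce cl cdl).
have cP : continuous (fun p : R * R => P p.1 p.2).
  have cfst : continuous (fun p : R * R => p.1) by move=> p; exact: cvg_fst.
  apply: continuous_lagrangian_variation; first exact: (hg 1%N).
  - exact: (continuous_line cfst (continuous_snd cq) (continuous_snd cQ)).
  - exact: (continuous_snd cQ).
  - exact: (continuous_line cfst (continuous_snd cu) (continuous_snd cdu)).
  - exact: (continuous_snd cdu).
  - exact: (continuous_line cfst (continuous_snd cl) (continuous_snd cdl)).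
  - exact: (continuous_snd cdl).
transitivity (\int[mu]_(t in `[0, 1]) P 0 t).
  by apply: eq_Rintegral => t _; rewrite /P !scale0r !addr0.
have [_ <-] := is_derive0_Rintegral01 cf df cP.
have -> : (fun e => \int[mu]_(t in `[0, 1]) f e t) =
    fun e => cost g q0 (fun t => u t + e *: du t) (fun t => lam t + e *: dl t).
  by apply/funext => e; apply: eq_Rintegral => t _; rewrite /f -state_variation.
by have [_ ->] := hopt.2 du dl (fun e => admissible_variation _ _ e sQ sdl Q0 Q1).
Qed.

Lemma state_constraint : {in `[0, 1], forall t, g (q t) = 0}.
Proof.
have sgq : smooth_real (fun t => g (q t)) by move=> k; exact: Ck_real_comp_mx (hg k) (sq k).
have s0 : smooth_real (fun=> 0 : 'rV[R]_n) by move=> k; exact: Ck_real_cst.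
have sdl : smooth_real (fun t => (-1) *: g (q t)).
  by move=> k; apply: Ck_realZ; [exact: Ck_real_cst | exact: sgq].
have := first_variation _ _ s0 sdl erefl erefl.
under eq_Rintegral do rewrite /lagrangian_variation derive_cst derive0 dotp0r dotp0l dotpZr.
under eq_Rintegral do rewrite sub0r add0r mulN1r opprK.
move/Rintegral01_ge0_eq0 => gq0 t t01; apply/eqP; rewrite -dotpp_eq0; apply/eqP.
apply: gq0 t01; first exact: continuous_dotp (sgq 0%N) (sgq 0%N).
by move=> s _; exact: dotpp_ge0.
Qed.

Let defect t := 'D_1 u t + lam t *m ('J g (q t))^T.

Let smooth_defect : smooth_real defect.
Proof.
move=> k; apply: Ck_realD; first exact: (su k.+1).2.
apply/Ck_real_mxP => i j; rewrite (ord1 i).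
have -> : (fun t => (lam t *m ('J g (q t))^T) 0 j) =
    (fun t => \sum_(l < m) lam t 0 l * 'D_(evec j) g (q t) 0 l).
  apply/funext => t; rewrite !mxE; apply: eq_bigr => l _.
  by rewrite mxE jacobianE //; exact: (hg 1%N).1.
apply: Ck_real_sum => l _; apply: Ck_realM; first by move/Ck_real_mxP : (sl k); apply.
apply: (Ck_real_comp k (fun x => 'D_(evec j) g x 0 l)) (sq k).
by apply: Ck_vec_entry; exact: (hg k.+1).2.
Qed.

Lemma weak_costate_equation (Q : R -> 'rV[R]_n) : smooth_real Q -> Q 0 = 0 -> Q 1 = 0 ->
  \int[mu]_(t in `[0, 1]) dotp (Q t) (defect t) = 0.
Proof.
move=> sQ Q0 Q1.
have s0 : smooth_real (fun=> 0 : 'rV[R]_m) by move=> k; exact: Ck_real_cst.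
have FV := first_variation _ _ sQ s0 Q0 Q1.
have BP := Rintegral01_dotp_by_parts _ _ (su 1%N) (sQ 1%N) Q0 Q1.
have cFV : continuous (fun t => lagrangian_variation g (q t) (Q t) (u t) ('D_1 Q t) (lam t) 0).
  apply: continuous_lagrangian_variation; [exact: (hg 1%N) | exact: (sq 0%N) | exact: (sQ 0%N)
    | exact: (su 0%N) | exact: (sQ 1%N).2 | exact: (sl 0%N) | exact: (s0 0%N)].
have cBP : continuous (fun t => dotp ('D_1 u t) (Q t) + dotp (u t) ('D_1 Q t)).
  move=> t; apply: cvgD; first exact: (continuous_dotp (su 1%N).2 (sQ 0%N) t).
  exact: (continuous_dotp (su 0%N) (sQ 1%N).2 t).
transitivity (\int[mu]_(t in `[0, 1]) (dotp ('D_1 u t) (Q t) + dotp (u t) ('D_1 Q t))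
  - \int[mu]_(t in `[0, 1]) lagrangian_variation g (q t) (Q t) (u t) ('D_1 Q t) (lam t) 0);
  last by rewrite BP FV subrr.
rewrite -RintegralB //; try exact: continuous_integrable_itv.
apply: eq_Rintegral => t _; rewrite /lagrangian_variation dotp0r addr0.
rewrite deriveEjacobian ?dotp_mulmxl; last exact: (hg 1%N).1.
by rewrite /defect dotpDr [dotp (Q t) ('D_1 u t)]dotpC; ring.
Qed.

Lemma costate_equation : {in `[0, 1], forall t, 'D_1 u t = - (lam t *m ('J g (q t))^T)}.
Proof.
pose phi (t : R) := t * (1 - t).
have sphi : smooth_real phi.
  move=> k; apply: Ck_realM; first exact: Ck_real_id.
  have -> : (fun t : R => 1 - t) = (fun t => 1 + (-1) * t) by apply/funext => t; rewrite mulN1r.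
  apply: Ck_realD; first exact: Ck_real_cst.
  by apply: Ck_realM; [exact: Ck_real_cst | exact: Ck_real_id].
have sQ : smooth_real (fun t => phi t *: defect t).
  by move=> k; apply: Ck_realZ; [exact: sphi | exact: smooth_defect].
have Q0 : phi 0 *: defect 0 = 0 by rewrite /phi mul0r scale0r.
have Q1 : phi 1 *: defect 1 = 0 by rewrite /phi subrr mulr0 scale0r.
have := weak_costate_equation _ sQ Q0 Q1.
under eq_Rintegral do rewrite dotpC dotpZr.
have cd : continuous defect := smooth_defect 0%N.
move/Rintegral01_ge0_eq0 => h0.
have d0 : {in `]0, 1[, forall t, defect t = 0}.
  move=> t t01; apply/eqP; rewrite -dotpp_eq0.
  have /eqP : t * (1 - t) * dotp (defect t) (defect t) = 0.
    apply: h0; last exact: subset_itv_oo_cc.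
    - move=> x; apply: cvgM; last exact: (continuous_dotp cd cd x).
      by apply: cvgM; [exact: cvg_id | apply: cvgB; [exact: cvg_cst | exact: cvg_id]].
    - move=> s; rewrite in_itv /= => /andP[s0 s1].
      by apply: mulr_ge0; [apply: mulr_ge0; rewrite ?subr_ge0 | exact: dotpp_ge0].
  move: t01; rewrite in_itv /= => /andP[t0 t1].
  by rewrite !mulf_eq0 subr_eq0 gt_eqF // (gt_eqF t1).
by move=> t /(continuous_eq0_itvcc ltr01 cd d0) /eqP; rewrite addr_eq0 => /eqP.
Qed.

End extremal_control.

Theorem proposition1 (R : realType) (n m : nat) (g : 'rV[R]_n -> 'rV[R]_m)
  (hmn : (m <= n)%N)
  (hg : smooth_vec g)
  (hrank : forall q : 'rV[R]_n, g q = 0 -> \rank ((jacobian g q)^T) = m)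
  (q0 qN : 'rV[R]_n) (hq0 : g q0 = 0) (hqN : g qN = 0)
  (u : R -> 'rV[R]_n) (lam : R -> 'rV[R]_m)
  (hopt : extremal g q0 qN u lam) :
  exists p : R -> 'rV[R]_n,
    state q0 u 0 = q0 /\ state q0 u 1 = qN /\
    forall t : R, t \in `[0, 1] ->
      is_derive t 1 (state q0 u) (u t) /\
      is_derive t 1 p (- (lam t *m (jacobian g (state q0 u t))^T)) /\
      g (state q0 u t) = 0 /\
      p t = u t.
Proof.
have [[su [_ qu1]] _] := hopt.
exists u; split; [|split] => //.
  by apply/rowP => j; rewrite !mxE oint0_0 addr0.
move=> t t01; split; [|split; [|split]] => //.
- exact: is_derive_state (su 0%N).
- by apply: DeriveDef; [exact: (su 1%N).1 | exact: (costate_equation hg hopt)].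
- exact: (state_constraint hg hopt).
Qed.
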